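(* Let $1\le n\le N$, $E\in\mathbb R$, $\mathcal J\in\mathbb N$, let $\tilde C(n)>0$ be a constant depending only on $n$, let $l,L\ge1$ and let $\Lambda^{(n)}_L(\mathbf u)$ be an $n$-particle cube. Assume there exist $\mathcal J$ cubes $\Lambda^{(n)}_{\tilde C(n)l}(\mathbf k^{(1)}),\dots,\Lambda^{(n)}_{\tilde C(n)l}(\mathbf k^{(\mathcal J)})$ such that for every $\mathbf v\in\mathbb Z^{nd}$ not belonging to any of these cubes, $\Lambda^{(n)}_l(\mathbf v)$ is $(E,\tfrac12)$-NS. Then, if $l>2\tilde C(n)$, the cube $\Lambda^{(n)}_L(\mathbf u)$ can be decomposed into two disjoint subsets $\Lambda^{(n)}_L(\mathbf u)=B\cup G$ such that $B=\bigcup_j\Omega_j$ is a finite union with $\operatorname{diam}(\Omega_j)\le(2\mathcal J+1)l^2$ for each $j$ and $\operatorname{dist}(\Omega_j,\Omega_{j'})\ge l^2$ for $j\ne j'$, and for every $\mathbf v\in G$ the cube $\Lambda^{(n)}_l(\mathbf v)$ is $(E,\tfrac12)$-NS.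
   Context: Points of $\mathbb Z^{nd}$ are $\mathbf x=(x_1,\dots,x_n)$, $x_j\in\mathbb Z^d$, $\|x_j\|=\max_i|x_j^{(i)}|$, $\|\mathbf x\|=\max_j\|x_j\|$, $\langle\mathbf x\rangle=\max\{1,\|\mathbf x\|\}$; distances and diameters are taken in this max norm. Cubes $\Lambda^{(n)}_L(\mathbf u)=\{\mathbf x\in\mathbb Z^{nd}:\|\mathbf x-\mathbf u\|\le L\}$. The $n$-particle operator is $\mathbf H^{(n)}=\frac1g(\mathbf T+\mathbf U)+\mathbf V$ on $\ell^2(\mathbb Z^{nd})$ ($g\ne0$, $r>0$): $\mathbf T(\mathbf x,\mathbf y)=\langle y_j-x_j\rangle^{-r}$ if there is $j$ with $x_i=y_i$ for all $i\ne j$, else $0$; $\mathbf U(\mathbf x)=\sum_{j_1<j_2}U(x_{j_1},x_{j_2})$ with $U$ bounded symmetric, vanishing when $\|x-x'\|\ge\mathrm r_0$; $\mathbf V(\mathbf x)=\sum_jV(x_j)$ with real $V(x)$. $\mathbf H^{(n)}_\Lambda$ is the restriction to $\Lambda$ and $\mathbf G^{(n)}_\Lambda(E)=(\mathbf H^{(n)}_\Lambda-E)^{-1}$. Sobolev norm of a matrix $\mathcal M$ on $X\times Y$: $\|\mathcal M\|_s^2=C_0\sum_{\mathbf v\in X-Y}(\sup_{\mathbf x-\mathbf y=\mathbf v}|\mathcal M(\mathbf x,\mathbf y)|)^2\langle\mathbf v\rangle^{2s}$, $C_0=C_0(s_0^{(n)})>0$ fixed. With parameters $\tau_n\ge0$,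 $nd/2<s_0^{(n)}\le r_n<r-nd/2$, a cube $\Lambda^{(n)}_l(\mathbf v)$ is $(E,\tfrac12)$-NS if $\mathbf G^{(n)}_{\Lambda^{(n)}_l(\mathbf v)}(E)$ exists and $\|\mathbf G^{(n)}_{\Lambda^{(n)}_l(\mathbf v)}(E)\|_s\le l^{\tau_n+s/2}$ for all $s\in[s_0^{(n)},r_n]$. *)

From HB Require Import structures.
From mathcomp Require Import all_boot all_order all_algebra.
From mathcomp Require Import all_classical all_reals all_analysis.
Set Implicit Arguments. Unset Strict Implicit. Unset Printing Implicit Defensive.
Import Order.TTheory GRing.Theory Num.Theory.
Local Open Scope classical_set_scope.
Local Open Scope ring_scope.

(* A point x = (x_1,...,x_n) of Z^{nd}: an n x d integer matrix, x_j = row j x. *)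
Notation pt n d := 'M[int]_(n, d).

Definition mnorm (n d : nat) (x : pt n d) : nat :=
  (\max_(j < n) \max_(i < d) `|x j i|%N)%N.
Definition rnorm (d : nat) (x : 'rV[int]_d) : nat :=
  (\max_(i < d) `|x ord0 i|%N)%N.
Definition bra (n d : nat) (x : pt n d) : nat := maxn 1 (mnorm x).
Definition brar (d : nat) (x : 'rV[int]_d) : nat := maxn 1 (rnorm x).

Definition cube (R : realType) (n d : nat) (L : R) (u : pt n d) : set (pt n d) :=
  [set x | ((mnorm (x - u))%:R <= L)%R].

Definition Tker (R : realType) (n d : nat) (r : R) (x y : pt n d) : R :=
  if [exists j : 'I_n, forall i : 'I_n, (i != j) ==> (row i x == row i y)]
  then ((\max_(j < n) brar (row j y - row j x))%N)%:R `^ (- r)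
  else 0.
(* Note: when at most one row differs, the max over j of <y_j - x_j> is
   <y_j - x_j> for the differing j (or 1 if x = y), as in the paper. *)

Definition Upot (R : realType) (n d : nat) (U : 'rV[int]_d -> 'rV[int]_d -> R)
  (x : pt n d) : R :=
  \sum_(j1 < n) \sum_(j2 < n | (j1 < j2)%N) U (row j1 x) (row j2 x).

Definition Vpot (R : realType) (n d : nat) (V : 'rV[int]_d -> R) (x : pt n d) : R :=
  \sum_(j < n) V (row j x).

Definition Hker (R : realType) (n d : nat) (g r : R)
  (U : 'rV[int]_d -> 'rV[int]_d -> R) (V : 'rV[int]_d -> R) (x y : pt n d) : R :=
  g^-1 * Tker r x y + (if x == y then g^-1 * Upot U x + Vpot V x else 0).

Definition is_resolvent (R : realType) (n d : nat) (g r : R)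
  (U : 'rV[int]_d -> 'rV[int]_d -> R) (V : 'rV[int]_d -> R) (E : R)
  (Lam : set (pt n d)) (G : pt n d -> pt n d -> R) : Prop :=
  forall x y, Lam x -> Lam y ->
    (\sum_(z \in Lam) (Hker g r U V x z - (if x == z then E else 0)) * G z y
       = (if x == y then 1 else 0)) /\
    (\sum_(z \in Lam) G x z * (Hker g r U V z y - (if z == y then E else 0))
       = (if x == y then 1 else 0)).

Definition diffset (n d : nat) (X Y : set (pt n d)) : set (pt n d) :=
  [set v | exists x y, [/\ X x, Y y & v = x - y]].
Definition supdiff (R : realType) (n d : nat) (X Y : set (pt n d))
  (M : pt n d -> pt n d -> R) (v : pt n d) : R :=
  sup [set a | exists x y, [/\ X x, Y y, x - y = v & a = `|M x y|]].
Definition sobnorm (R : realType) (n d : nat) (C0 s : R) (X Y : set (pt n d))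
  (M : pt n d -> pt n d -> R) : R :=
  Num.sqrt (C0 * \sum_(v \in diffset X Y)
                   (supdiff X Y M v) ^+ 2 * ((bra v)%:R `^ (2 * s))).

Definition NS (R : realType) (n d : nat) (g r : R)
  (U : 'rV[int]_d -> 'rV[int]_d -> R) (V : 'rV[int]_d -> R)
  (C0 tau s0 rn : R) (E l : R) (v : pt n d) : Prop :=
  exists G : pt n d -> pt n d -> R,
    is_resolvent g r U V E (cube l v) G /\
    forall s, s0 <= s <= rn ->
      sobnorm C0 s (cube l v) (cube l v) G <= l `^ (tau + s / 2).

Definition diam_le (R : realType) (n d : nat) (Om : set (pt n d)) (D : R) : Prop :=
  forall x y, Om x -> Om y -> ((mnorm (x - y))%:R <= D)%R.
Definition dist_ge (R : realType) (n d : nat) (A B : set (pt n d)) (D : R) : Prop :=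
  forall x y, A x -> B y -> (D <= (mnorm (x - y))%:R)%R.

(* The points of the big cube that are not NS all lie in the J small cubes
   around the k_j, each of diameter at most 2 Ct l < l^2.  Link two small cubes
   when their bad points come closer than l^2, and let the clusters be the
   bad points of the connected components of this graph on J vertices.  Two
   clusters are at distance at least l^2 by construction, and two points of a
   cluster are joined through a simple path of at most J cubes and J - 1
   links, each of length at most l^2. *)

From HB Require Import structures.
From mathcomp Require Import all_boot all_order all_algebra.
From mathcomp Require Import all_classical all_reals all_analysis.
From mathcomp Require Import lra.
Set Implicit Arguments. Unset Strict Implicit. Unset Printing Implicit Defensive.
Import Order.TTheory GRing.Theory Num.Theory.
Local Open Scope classical_set_scope.
Local Open Scope ring_scope.

Lemma mnorm_subC (n d : nat) (x y : pt n d) : mnorm (x - y) = mnorm (y - x).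
Proof.
by rewrite /mnorm; apply: eq_bigr => j _; apply: eq_bigr => i _; rewrite !mxE distnC.
Qed.

Lemma leq_mnorm_sub (n d : nat) (x y z : pt n d) :
  (mnorm (x - z) <= mnorm (x - y) + mnorm (y - z))%N.
Proof.
rewrite /mnorm; apply/bigmax_leqP => j _; apply/bigmax_leqP => i _.
rewrite !mxE; apply: leq_trans (leqD_dist _ (y j i) _) _.
by apply: leq_add; apply: leq_trans (leq_bigmax j); apply: leq_trans (leq_bigmax i);
  rewrite !mxE.
Qed.

Lemma ler_mnorm_sub (R : realType) (n d : nat) (x y z : pt n d) :
  (mnorm (x - z))%:R <= (mnorm (x - y))%:R + (mnorm (y - z))%:R :> R.
Proof. by rewrite -natrD ler_nat leq_mnorm_sub. Qed.

Lemma diam_le_cube (R : realType) (n d : nat) (rho : R) (c : pt n d) :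
  diam_le (cube rho c) (2 * rho).
Proof.
move=> x y cx cy; rewrite /cube /= [mnorm (y - c)]mnorm_subC in cx cy.
have := ler_mnorm_sub R x c y; lra.
Qed.

Section Clusters.

Variables (R : realType) (n d J : nat) (A : 'I_J -> set (pt n d)) (b : R).

Definition linked : rel 'I_J := fun j j' =>
  `[< exists x y, [/\ A j x, A j' y & (mnorm (x - y))%:R < b] >].

Lemma linked_sym : symmetric linked.
Proof.
by move=> j j'; apply/asboolP/asboolP => -[x [y [Ax Ay xy]]]; exists y, x; rewrite mnorm_subC.
Qed.

Let connect_linked_sym := sym_connect_sym linked_sym.

(* A component is indexed by its root; the other indices give empty clusters. *)
Definition cluster (i : 'I_J) : set (pt n d) :=
  if fingraph.root linked i == i then [set v | exists2 j, connect linked i j & A j v]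
  else set0.

Lemma bigcup_cluster : \bigcup_(i in setT) cluster i = \bigcup_(j in setT) A j.
Proof.
apply/seteqP; split=> v.
  case=> i _; rewrite /cluster; case: ifP => // _ [j _ Ajv]; by exists j.
case=> j _ Ajv; exists (fingraph.root linked j) => //.
rewrite /cluster root_root // eqxx; exists j => //.
by rewrite connect_linked_sym connect_root.
Qed.

Lemma dist_ge_cluster (i i' : 'I_J) : i != i' -> dist_ge (cluster i) (cluster i') b.
Proof.
move=> neq_ii' x y; rewrite /cluster.
case: ifP => [/eqP root_i|_ []] //; case: ifP => [/eqP root_i'|_ _ []] //.
move=> [j cij Ajx] [j' ci'j' Aj'y]; rewrite leNgt; apply/negP => near_xy.
have ljj' : linked j j' by apply/asboolP; exists x, y.
have cii' : connect linked i i'.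
  apply: connect_trans cij (connect_trans (connect1 ljj') _).
  by rewrite connect_linked_sym.
move: cii' => /(fingraph.rootP connect_linked_sym).
by rewrite root_i root_i' => eq_ii'; rewrite eq_ii' eqxx in neq_ii'.
Qed.

Variable a : R.
Hypothesis diam_A : forall j, diam_le (A j) a.

Lemma path_linked_dist (p : seq 'I_J) (j : 'I_J) (x y : pt n d) :
  path linked j p -> A j x -> A (last j p) y ->
  (mnorm (x - y))%:R <= (size p).+1%:R * a + (size p)%:R * b.
Proof.
elim: p j x => [|j1 p IHp] j x /=.
  by move=> _ Ajx Ajy; rewrite mul1r mul0r addr0; exact: diam_A Ajx Ajy.
case/andP=> /asboolP [x1 [y1 [Ajx1 Aj1y1 near]]] path_p Ajx Ay.
have le_xx1 := diam_A Ajx Ajx1.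
have le_y1y := IHp _ _ path_p Aj1y1 Ay.
apply: le_trans (ler_mnorm_sub R x x1 y) _.
apply: le_trans (lerD le_xx1 (ler_mnorm_sub R x1 y1 y)) _.
rewrite -[(size p).+2]addn1 -[(size p).+1]addn1 !natrD; lra.
Qed.

Hypotheses (a_ge0 : 0 <= a) (b_ge0 : 0 <= b).

Lemma diam_le_cluster (i : 'I_J) : diam_le (cluster i) (J%:R * (a + b)).
Proof.
move=> x y; rewrite /cluster; case: ifP => _ //.
move=> [j cij Ajx] [j' cij' Aj'y].
have /connectP[p path_p last_p] : connect linked j j'.
  by apply: connect_trans cij'; rewrite connect_linked_sym.
move: Aj'y; rewrite last_p; case: (shortenP path_p) => q path_q uniq_jq _ Aqy.
have size_q : (size (j :: q) <= J)%N.
  by rewrite -(card_uniqP uniq_jq); apply: leq_trans (max_card _) _; rewrite card_ord.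
apply: le_trans (path_linked_dist path_q Ajx Aqy) _.
by rewrite mulrDr lerD // ler_wpM2r // ler_nat // ltnW.
Qed.

End Clusters.

Theorem lemma7p4 (R : realType) (d n N : nat)
  (* standing assumptions on the operator H^{(n)} *)
  (g r r0 : R) (U : 'rV[int]_d -> 'rV[int]_d -> R) (V : 'rV[int]_d -> R)
  (hg : g != 0) (hr : 0 < r)
  (hUb : exists M : R, forall x y, `|U x y| <= M)
  (hUs : forall x y, U x y = U y x)
  (hUr : forall x y, r0 <= (rnorm (x - y))%:R -> U x y = 0)
  (* parameters of the NS property *)
  (C0 tau s0 rn : R) (hC0 : 0 < C0) (htau : 0 <= tau)
  (hs0 : (n * d)%:R / 2 < s0) (hs0rn : s0 <= rn) (hrn : rn < r - (n * d)%:R / 2)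
  (* data of the lemma *)
  (hd : (0 < d)%N) (hn1 : (1 <= n)%N) (hnN : (n <= N)%N)
  (E : R) (J : nat) (Ct : R) (hCt : 0 < Ct) (l L : R) (hl : 1 <= l) (hL : 1 <= L)
  (u : pt n d) (k : 'I_J -> pt n d)
  (hNS : forall v : pt n d, (forall j : 'I_J, ~ cube (Ct * l) (k j) v) ->
           NS g r U V C0 tau s0 rn E l v) :
  2 * Ct < l ->
  exists (B G : set (pt n d)),
    [/\ B `&` G = set0, B `|` G = cube L u,
        exists (m : nat) (Om : 'I_m -> set (pt n d)),
          [/\ B = \bigcup_(j in setT) Om j,
              forall j, diam_le (Om j) ((2 * J + 1)%:R * l ^+ 2) &
              forall j j', j != j' -> dist_ge (Om j) (Om j') (l ^+ 2)]
      & forall v, G v -> NS g r U V C0 tau s0 rn E l v].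
Proof.
move=> lt_2Ct_l.
pose NSl : set (pt n d) := NS g r U V C0 tau s0 rn E l.
pose B := cube L u `\` NSl.
pose A j := cube (Ct * l) (k j) `&` B.
have B_sub : B `<=` \bigcup_(j in setT) cube (Ct * l) (k j).
  move=> v [_ not_NSv]; apply: contrapT => far_v; apply: not_NSv.
  by apply: hNS => j near_j; apply: far_v; exists j.
have bigcup_A : \bigcup_(j in setT) A j = B by rewrite -setI_bigcupl; apply/setIidr.
have diam_A j : diam_le (A j) (l ^+ 2).
  move=> x y [cx _] [cy _]; apply: le_trans (diam_le_cube cx cy) _.
  by rewrite expr2; nra.
have l2_ge0 : 0 <= l ^+ 2 by rewrite exprn_ge0 // (le_trans ler01).
exists B, (cube L u `&` NSl); split.
- by rewrite [_ `&` NSl]setIC setIA setDKI set0I.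
- by rewrite setUC setUIDK.
- exists J, (cluster A (l ^+ 2)); split.
  + by rewrite bigcup_cluster.
  + move=> i x y Cx Cy; apply: le_trans (diam_le_cluster diam_A l2_ge0 l2_ge0 Cx Cy) _.
    by rewrite natrD natrM; nra.
  + by move=> i i' /dist_ge_cluster.
- by move=> v [].
Qed.
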